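(* Consider MDVI$(\alpha,K,M)$ with any $\alpha\in[0,1)$ and positive integers $K,M$ on an MDP as in the context, let $\delta\in(0,1)$, and let $\mathcal{E}_1$, $\mathcal{E}_2$ be the events defined in the context. On the event $\mathcal{E}_1\cap\mathcal{E}_2$, for every $k\in\{1,\dots,K-1\}$, $$\sigma(v_k) \leq 2H\min\left\{1,\ 2\max\{\alpha,\gamma\}^{k-1} + \frac{A_{\gamma,k-1}}{A_\infty} + 6H\sqrt{\frac{\iota_1}{M}}\right\}\mathbf{1} + \sigma(v^* )$$ (componentwise). Furthermore, $\sigma(v_0)=0$.
   Context: MDP: finite state set $\mathcal{X}$, finite action set $\mathcal{A}$, discount $\gamma\in[0,1)$, reward $r\in[-1,1]^{\mathcal{X}\times\mathcal{A}}$, transition kernel $P(y|x,a)$, $H=1/(1-\gamma)$, $(Pv)(x,a)=\sum_y P(y|x,a)v(y)$; $v^*$ is the optimal state-value function; $\mathbf 1$ the all-ones vector. MDVI$(\alpha,K,M)$: $s_0 = 0$, $w_0=w_{-1}=0$; for $k=0,\dots,K-1$: $v_k = w_k-\alpha w_{k-1}$; for each $(x,a)$, independent samples $y_{k,m,x,a}\sim P(\cdot|x,a)$, $m\in[M]$; $q_{k+1}(x,a) = r(x,a)+\frac{\gamma}{M}\sum_m v_k(y_{k,m,x,a})$; $s_{k+1}=q_{k+1}+\alpha s_k$; $w_{k+1}(x)=\max_a s_{k+1}(x,a)$. Notation: for $v\in\mathbb{R}^{\mathcal{X}}$, $\mathrm{Var}_P(v)(x,a) = (Pv^2)(x,a)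 - (Pv)^2(x,a)$ and $\sigma(v)=\sqrt{\mathrm{Var}_P(v)}$. $\widehat P_k v(x,a) = \frac1M\sum_m v(y_{k,m,x,a})$; $\varepsilon_k = \gamma\widehat P_{k-1}v_{k-1} - \gamma P v_{k-1}$; $E_k = \sum_{j=1}^k\alpha^{k-j}\varepsilon_j$; $A_\infty = 1/(1-\alpha)$; $A_{\gamma,k}=\sum_{j=0}^{k-1}\gamma^{k-j}\alpha^j$ (so $A_{\gamma,0}=0$); $\iota_1 = \log(8K|\mathcal{X}||\mathcal{A}|/\delta)$. $\mathcal{E}_1$: $\|E_k\|_\infty<3H\sqrt{A_\infty\iota_1/M}$ for all $k\in[K]$; $\mathcal{E}_2$: $\|\varepsilon_k\|_\infty<3H\sqrt{\iota_1/M}$ for all $k\in[K]$. *)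

From mathcomp Require Import all_boot all_order all_algebra.
From mathcomp Require Import reals exp.
Set Implicit Arguments. Unset Strict Implicit. Unset Printing Implicit Defensive.
Import Order.TTheory GRing.Theory Num.Theory.
Local Open Scope ring_scope.

Section MDVI.
Variables (R : realType) (X A : finType).

(* (P v)(x,a) = sum_y P(y|x,a) v(y);  P x a y stands for P(y|x,a). *)
Definition Pop (P : X -> A -> X -> R) (v : X -> R) : X -> A -> R :=
  fun x a => \sum_(y : X) P x a y * v y.

Definition VarP (P : X -> A -> X -> R) (v : X -> R) : X -> A -> R :=
  fun x a => Pop P (fun y => v y ^+ 2) x a - (Pop P v x a) ^+ 2.
Definition sigmaP (P : X -> A -> X -> R) (v : X -> R) : X -> A -> R :=
  fun x a => Num.sqrt (VarP P v x a).

Definition is_kernel (P : X -> A -> X -> R) : Prop :=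
  (forall x a y, 0 <= P x a y) /\ (forall x a, \sum_(y : X) P x a y = 1).

Definition maxA (a0 : A) (f : A -> R) : R := \big[Num.max/f a0]_(a : A) f a.

Definition bellman_opt (a0 : A) (gamma : R) (r : X -> A -> R)
  (P : X -> A -> X -> R) (v : X -> R) : Prop :=
  forall x, v x = maxA a0 (fun a => r x a + gamma * Pop P v x a).

(* Samples: y k m x a = y_{k,m,x,a}, m : 'I_M. *)
Variables (M : nat) (samples : nat -> 'I_M -> X -> A -> X).

Definition Phat (k : nat) (v : X -> R) : X -> A -> R :=
  fun x a => (M%:R)^-1 * \sum_(m < M) v (samples k m x a).

Variables (a0 : A) (alpha gamma : R) (r : X -> A -> R).

(* mdvi_state k = (s_k, w_k, w_{k-1}), with s_0 = 0, w_0 = w_{-1} = 0. *)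
Fixpoint mdvi_state (k : nat) : (X -> A -> R) * (X -> R) * (X -> R) :=
  match k with
  | 0 => (fun _ _ => 0, fun _ => 0, fun _ => 0)
  | k'.+1 =>
      let: (s, w, wp) := mdvi_state k' in
      let v := fun x => w x - alpha * wp x in
      let q := fun x a => r x a + gamma * Phat k' v x a in
      let s' := fun x a => q x a + alpha * s x a in
      let w' := fun x => maxA a0 (s' x) in
      (s', w', w)
  end.

Definition mdvi_s k := (mdvi_state k).1.1.
Definition mdvi_w k := (mdvi_state k).1.2.
Definition mdvi_wprev k := (mdvi_state k).2.

Definition mdvi_v (k : nat) : X -> R :=
  fun x => mdvi_w k x - alpha * mdvi_wprev k x.

Definition eps (P : X -> A -> X -> R) (k : nat) : X -> A -> R :=
  fun x a => gamma * Phat k.-1 (mdvi_v k.-1) x a - gamma * Pop P (mdvi_v k.-1) x a.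

Definition Ek (P : X -> A -> X -> R) (k : nat) : X -> A -> R :=
  fun x a => \sum_(1 <= j < k.+1) alpha ^+ (k - j) * eps P j x a.

End MDVI.

Definition Hor {R : realType} (gamma : R) : R := (1 - gamma)^-1.
Definition Ainf {R : realType} (alpha : R) : R := (1 - alpha)^-1.
Definition Agamma {R : realType} (alpha gamma : R) (k : nat) : R :=
  \sum_(0 <= j < k) gamma ^+ (k - j) * alpha ^+ j.
Definition iota1 {R : realType} (X A : finType) (K : nat) (delta : R) : R :=
  ln ((8 * K * #|X| * #|A|)%:R / delta).

From Pilot Require Import Defs.
From mathcomp Require Import all_boot all_order all_algebra.
From mathcomp Require Import reals exp.
From mathcomp Require Import ring lra.
Import Order.TTheory GRing.Theory Num.Theory.
Local Open Scope ring_scope.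
Set Implicit Arguments. Unset Strict Implicit.

(* Put A_k = sum_(j < k) alpha^j.  The accumulated sampling error
   s_k - A_k r - gamma P w_(k-1) obeys e_(k+1) = eps_(k+1) + alpha e_k, so it is at most
   A_k eb, where eb bounds the errors of event E_2.  Pushing this through the Bellman
   recursion, using that the max over actions is nonexpansive, gives
     |w_k - A_k vstar| <= H A_(gamma,k) + A_inf H eb   and
     |w_(k+1) - w_k| <= A_(gamma,k) + alpha^k + 2 H eb,
   and the identity
     v_k - vstar = (1 - alpha)(w_k - A_k vstar) - alpha^k vstar + alpha (w_k - w_(k-1))
   turns these into the second term of the minimum; the first one is |v_k|, |vstar| <= H.
   Finally sigma(v) is the L2(P) norm of v - P v, so sigma is 1-Lipschitz for the sup norm:
   sigma(v_k) <= sup |v_k - vstar| + sigma(vstar). *)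

Section MaxA.
Variables (R : realType) (A : finType) (a0 : A).

Lemma maxA_attained (f : A -> R) : exists a, Defs.maxA a0 f = f a.
Proof.
rewrite /Defs.maxA; apply: (big_ind (fun y => exists a, y = f a)); first by exists a0.
- by move=> _ _ [a1 ->] [a2 ->]; rewrite maxEle; case: ifP => _; eauto.
- by move=> a _; exists a.
Qed.

Lemma le_maxA (f : A -> R) a : f a <= Defs.maxA a0 f.
Proof. by rewrite /Defs.maxA (bigD1 a) //= le_max lexx. Qed.

Lemma maxA_cst (c : R) : Defs.maxA a0 (fun _ => c) = c.
Proof. by have [a ->] := maxA_attained (fun _ : A => c). Qed.

Lemma maxA_dist (f g : A -> R) c B : 0 <= c ->
  (forall a, `|f a - c * g a| <= B) -> `|Defs.maxA a0 f - c * Defs.maxA a0 g| <= B.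
Proof.
move=> c0 fg.
have [a1 ef] := maxA_attained f; have [a2 eg] := maxA_attained g.
have f_a2 := le_maxA f a2; have g_a1 := le_maxA g a1.
rewrite ef eg in f_a2 g_a1 *.
have := ler_wpM2l c0 g_a1.
move: (fg a1) (fg a2); rewrite !ler_norml => /andP[? ?] /andP[? ?] ?.
apply/andP; split; lra.
Qed.

Lemma normr_maxA_le (f : A -> R) B : (forall a, `|f a| <= B) -> `|Defs.maxA a0 f| <= B.
Proof.
move=> fB; have := @maxA_dist f f 0 B (lexx _).
by rewrite mul0r subr0; apply=> a; rewrite mul0r subr0.
Qed.

End MaxA.

Section Kernel.
Variables (R : realType) (X A : finType) (P : X -> A -> X -> R).
Hypothesis kP : is_kernel P.

Lemma Pop_eq f g x a : f =1 g -> Pop P f x a = Pop P g x a.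
Proof. by move=> fg; apply: eq_bigr => y _; rewrite fg. Qed.

Lemma Pop_affine (f g : X -> R) c1 c2 c3 x a :
  Pop P (fun y => c1 * f y + c2 * g y + c3) x a
  = c1 * Pop P f x a + c2 * Pop P g x a + c3.
Proof.
have [_ P1] := kP.
rewrite /Pop -[in RHS](mulr1 c3) -(P1 x a) !mulr_sumr -!big_split /=.
by apply: eq_bigr => y _; ring.
Qed.

Lemma Pop_cst c x a : Pop P (fun _ => c) x a = c.
Proof. by case: kP => _ P1; rewrite /Pop -big_distrl /= P1 mul1r. Qed.

Lemma PopB f g c x a :
  Pop P (fun y => f y - c * g y) x a = Pop P f x a - c * Pop P g x a.
Proof.
rewrite (Pop_eq (g := fun y => 1 * f y + (- c) * g y + 0)); last by move=> y; ring.
by rewrite Pop_affine; ring.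
Qed.

Lemma Pop_le f g x a : (forall y, f y <= g y) -> Pop P f x a <= Pop P g x a.
Proof.
case: kP => P_ge0 _ fg; apply: ler_sum => y _.
by rewrite ler_wpM2l.
Qed.

Lemma Pop_ge0 f x a : (forall y, 0 <= f y) -> 0 <= Pop P f x a.
Proof. by move=> f_ge0; rewrite -(Pop_cst 0 x a); apply: Pop_le. Qed.

Lemma normr_Pop_le f B x a : (forall y, `|f y| <= B) -> `|Pop P f x a| <= B.
Proof.
move=> fB; have fB' y : - B <= f y <= B by rewrite -ler_norml.
rewrite ler_norml; apply/andP; split.
- by rewrite -[X in X <= _](Pop_cst (- B) x a); apply: Pop_le => y; case/andP: (fB' y).
- by rewrite -[X in _ <= X](Pop_cst B x a); apply: Pop_le => y; case/andP: (fB' y).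
Qed.

Lemma VarP_shift v m x a :
  Pop P (fun y => (v y - m) ^+ 2) x a = VarP P v x a + (Pop P v x a - m) ^+ 2.
Proof.
rewrite /VarP (Pop_eq (g := fun y => 1 * v y ^+ 2 + (- 2 * m) * v y + m ^+ 2));
  last by move=> y; ring.
by rewrite Pop_affine; ring.
Qed.

Lemma VarP_ge0 v x a : 0 <= VarP P v x a.
Proof.
have := VarP_shift v (Pop P v x a) x a; rewrite subrr expr0n addr0 => <-.
by apply: Pop_ge0 => y; apply: sqr_ge0.
Qed.

Lemma Pop_sqr_le v x a : Pop P v x a ^+ 2 <= Pop P (fun y => v y ^+ 2) x a.
Proof. by rewrite -subr_ge0; apply: VarP_ge0. Qed.

Lemma Pop_centered_abs_le v x a :
  Pop P (fun y => `|v y - Pop P v x a|) x a <= sigmaP P v x a.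
Proof.
set c := fun y => v y - Pop P v x a.
have c_sqr : Pop P (fun y => `|c y| ^+ 2) x a = VarP P v x a.
  have := VarP_shift v (Pop P v x a) x a; rewrite subrr expr0n addr0 => <-.
  by apply: Pop_eq => y; rewrite real_normK ?num_real.
rewrite /sigmaP -c_sqr -[X in X <= _]ger0_norm; last by apply: Pop_ge0.
by rewrite -sqrtr_sqr ler_wsqrtr // Pop_sqr_le.
Qed.

Lemma sigmaP_cst v c x a : (forall y, v y = c) -> sigmaP P v x a = 0.
Proof.
move=> vc; rewrite /sigmaP /VarP.
have -> : Pop P v x a = c by rewrite -(Pop_cst c x a); apply: Pop_eq.
have -> : Pop P (fun y => v y ^+ 2) x a = c ^+ 2.
  by rewrite -(Pop_cst (c ^+ 2) x a); apply: Pop_eq => y; rewrite vc.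
by rewrite subrr sqrtr0.
Qed.

Lemma sigmaP_le_dist v u D x a : (forall y, `|v y - u y| <= D) ->
  sigmaP P v x a <= D + sigmaP P u x a.
Proof.
move=> vuD; set m := Pop P u x a; set s := sigmaP P u x a.
have D_ge0 : 0 <= D := le_trans (normr_ge0 _) (vuD x).
have s_ge0 : 0 <= s by apply: sqrtr_ge0.
have s_sqr : s ^+ 2 = VarP P u x a by rewrite sqr_sqrtr // VarP_ge0.
have u_centered := Pop_centered_abs_le u x a; rewrite -/m -/s in u_centered.
have pointwise y : (v y - m) ^+ 2 <= 1 * (u y - m) ^+ 2 + (2 * D) * `|u y - m| + D ^+ 2.
  rewrite (_ : v y - m = (u y - m) + (v y - u y)); last by ring.
  have := vuD y; move: (v y - u y) (u y - m) => d c dD.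
  have cd : c * d <= `|c| * D.
    by apply: le_trans (ler_norm _) _; rewrite normrM ler_wpM2l.
  have d2 : d ^+ 2 <= D ^+ 2 by rewrite -real_normK ?num_real // lerXn2r ?nnegrE.
  rewrite (_ : (c + d) ^+ 2 = c ^+ 2 + 2 * (c * d) + d ^+ 2); [lra | ring].
have VarP_v : VarP P v x a <= (D + s) ^+ 2.
  have := VarP_shift v m x a; have := sqr_ge0 (Pop P v x a - m).
  have := Pop_le x a pointwise; rewrite Pop_affine (VarP_shift u m) subrr expr0n addr0 -s_sqr.
  nra.
by rewrite /sigmaP -[D + s]ger0_norm ?addr_ge0 // -sqrtr_sqr ler_wsqrtr.
Qed.

End Kernel.

Definition Aalpha {R : realType} (alpha : R) (k : nat) : R := \sum_(j < k) alpha ^+ j.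

Section Sums.
Variables (R : realType) (alpha gamma : R).
Hypotheses (alpha_ge0 : 0 <= alpha) (alpha_lt1 : alpha < 1).

Lemma AalphaS k : Aalpha alpha k.+1 = 1 + alpha * Aalpha alpha k.
Proof.
by rewrite /Aalpha big_ord_recl expr0 mulr_sumr; congr (_ + _); apply: eq_bigr => j _; rewrite exprS.
Qed.

Lemma AalphaSr k : Aalpha alpha k.+1 = Aalpha alpha k + alpha ^+ k.
Proof. by rewrite /Aalpha big_ord_recr. Qed.

Lemma Aalpha_ge0 k : 0 <= Aalpha alpha k.
Proof. by apply: sumr_ge0 => j _; apply: exprn_ge0. Qed.

Lemma Aalpha_geom k : (1 - alpha) * Aalpha alpha k + alpha ^+ k = 1.
Proof. by rewrite -[1 - alpha]opprB mulNr -subrX1; ring. Qed.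

Lemma Aalpha_mul_le1 k : (1 - alpha) * Aalpha alpha k <= 1.
Proof. by have := exprn_ge0 k alpha_ge0; have := Aalpha_geom k; lra. Qed.

Lemma Aalpha_le_Ainf k : Aalpha alpha k <= Ainf alpha.
Proof.
have alpha'_gt0 : 0 < 1 - alpha by rewrite subr_gt0.
by rewrite -(ler_pM2l alpha'_gt0) /Ainf mulfV ?gt_eqF // Aalpha_mul_le1.
Qed.

Lemma AgammaS k : Agamma alpha gamma k.+1 = gamma * Agamma alpha gamma k + gamma * alpha ^+ k.
Proof.
rewrite /Agamma big_nat_recr //= subSnn expr1 mulr_sumr; congr (_ + _).
by apply: eq_big_nat => j /andP[_ jk]; rewrite subSn 1?ltnW // exprS mulrA.
Qed.

Lemma Agamma_ge0 k : 0 <= gamma -> 0 <= Agamma alpha gamma k.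
Proof. by move=> gamma_ge0; apply: sumr_ge0 => j _; rewrite mulr_ge0 ?exprn_ge0. Qed.

Lemma Agamma_diff k : (alpha - gamma) * Agamma alpha gamma k = gamma * alpha ^+ k - gamma ^+ k.+1.
Proof.
elim: k => [|k IH]; first by rewrite /Agamma big_nil; ring.
by rewrite AgammaS mulrDr mulrCA IH !exprS; ring.
Qed.

End Sums.

Section Recursion.
Variables (R : realType) (X A : finType) (M : nat) (samples : nat -> 'I_M -> X -> A -> X).
Variables (a0 : A) (alpha gamma : R) (r : X -> A -> R).

Local Notation s := (mdvi_s samples a0 alpha gamma r).
Local Notation w := (mdvi_w samples a0 alpha gamma r).
Local Notation wp := (mdvi_wprev samples a0 alpha gamma r).
Local Notation v := (mdvi_v samples a0 alpha gamma r).

Lemma mdvi_sS k x a : s k.+1 x a = r x a + gamma * Phat samples k (v k) x a + alpha * s k x a.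
Proof. by rewrite /mdvi_s /mdvi_v /mdvi_w /mdvi_wprev /=; case: mdvi_state => [[]]. Qed.

Lemma mdvi_wprevS k x : wp k.+1 x = w k x.
Proof. by rewrite /mdvi_wprev /mdvi_w /=; case: mdvi_state => [[]]. Qed.

Lemma mdvi_w_maxA k x : w k x = Defs.maxA a0 (s k x).
Proof.
case: k => [|k]; first by rewrite maxA_cst.
by rewrite /mdvi_s /mdvi_w /=; case: mdvi_state => [[]].
Qed.

End Recursion.

Section Horizon.
Variables (R : realType) (gamma : R).
Hypotheses (gamma_ge0 : 0 <= gamma) (gamma_lt1 : gamma < 1).

Lemma mulr_Hor : (1 - gamma) * Hor gamma = 1.
Proof. by rewrite /Hor mulfV // subr_eq0 eq_sym lt_eqF. Qed.

Lemma Hor_ge1 : 1 <= Hor gamma.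
Proof. by rewrite /Hor invf_ge1 ?subr_gt0 // gerBl. Qed.

Lemma Hor_rec : 1 + gamma * Hor gamma = Hor gamma.
Proof. by have := mulr_Hor; lra. Qed.

End Horizon.

Section Rate.
Variables (R : realType) (alpha gamma eb : R).
Hypotheses (alpha_ge0 : 0 <= alpha) (alpha_lt1 : alpha < 1).
Hypotheses (gamma_ge0 : 0 <= gamma) (gamma_lt1 : gamma < 1) (eb_ge0 : 0 <= eb).
Local Notation H := (Hor gamma).

Lemma contraction_rate_le n :
  (1 - alpha) * (H * Agamma alpha gamma n.+1 + Ainf alpha * H * eb)
    + alpha ^+ n.+1 * H + alpha * (Agamma alpha gamma n + alpha ^+ n + 2 * H * eb)
  <= 2 * H * (2 * Num.max alpha gamma ^+ n + Agamma alpha gamma n / Ainf alpha + 2 * eb).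
Proof.
rewrite /Ainf invrK AgammaS exprS.
set G := Agamma alpha gamma n; set an := alpha ^+ n; set m := Num.max alpha gamma ^+ n.
have H_ge1 := Hor_ge1 gamma_ge0 gamma_lt1.
have H_ge0 : 0 <= H := le_trans ler01 H_ge1.
have H_1 : 0 <= H - 1 by rewrite subr_ge0.
have alpha' : 0 <= 1 - alpha by rewrite subr_ge0 ltW.
have gamma' : 0 <= 1 - gamma by rewrite subr_ge0 ltW.
have G_ge0 : 0 <= G by apply: Agamma_ge0.
have an_ge0 : 0 <= an by apply: exprn_ge0.
have an_le_m : an <= m by rewrite lerXn2r ?nnegrE ?le_max ?lexx ?alpha_ge0.
have m_ge0 : 0 <= m := le_trans an_ge0 an_le_m.
have Ainf_eb : (1 - alpha) * ((1 - alpha)^-1 * H * eb) = H * eb.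
  by rewrite mulrA mulrA mulfV ?mul1r // subr_eq0 eq_sym lt_eqF.
have G_le : G <= (1 - alpha) * H * G + H * m.
  have G_eq : G = (1 - gamma) * H * G by rewrite mulr_Hor // mul1r.
  have : (alpha - gamma) * G <= m.
    have := ler_piMl an_ge0 (ltW gamma_lt1); have := exprn_ge0 n.+1 gamma_ge0.
    rewrite Agamma_diff -/G -/an; lra.
  move/(ler_wpM2l H_ge0); lra.
have := mulr_ge0 (mulr_ge0 alpha' H_ge0) (mulr_ge0 G_ge0 gamma').
have := mulr_ge0 (mulr_ge0 H_ge0 an_ge0) (mulr_ge0 alpha' gamma').
have := ler_wpM2l H_ge0 an_le_m; have := mulr_ge0 alpha' G_ge0.
have := ler_piMl an_ge0 (ltW alpha_lt1); have := mulr_ge0 H_1 m_ge0.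
have := mulr_ge0 (mulr_ge0 alpha' H_ge0) eb_ge0; have := mulr_ge0 H_ge0 eb_ge0.
lra.
Qed.

End Rate.

Section Bounds.
Variables (R : realType) (X A : finType) (M : nat) (samples : nat -> 'I_M -> X -> A -> X).
Variables (a0 : A) (alpha gamma : R) (r : X -> A -> R) (P : X -> A -> X -> R) (vs : X -> R).
Variables (K : nat) (eb : R).
Hypotheses (gamma_ge0 : 0 <= gamma) (gamma_lt1 : gamma < 1).
Hypotheses (alpha_ge0 : 0 <= alpha) (alpha_lt1 : alpha < 1).
Hypotheses (r_bound : forall x a, `|r x a| <= 1) (kP : is_kernel P).
Hypothesis vs_opt : bellman_opt a0 gamma r P vs.
Hypotheses (M_gt0 : (0 < M)%N) (eb_ge0 : 0 <= eb).
Hypothesis eps_bound : forall k, (1 <= k <= K)%N -> forall x a,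
  `|eps samples a0 alpha gamma r P k x a| <= eb.

Local Notation s := (mdvi_s samples a0 alpha gamma r).
Local Notation w := (mdvi_w samples a0 alpha gamma r).
Local Notation wp := (mdvi_wprev samples a0 alpha gamma r).
Local Notation v := (mdvi_v samples a0 alpha gamma r).
Local Notation H := (Hor gamma).

Lemma normr_Phat_le k (f : X -> R) (B : R) x a :
  (forall y, `|f y| <= B) -> `|Phat samples k f x a| <= B.
Proof.
move=> fB; have M_pos : (0 : R) < M%:R by rewrite ltr0n.
rewrite /Phat normrM ger0_norm ?invr_ge0 ?ler0n // ler_pdivrMl //.
apply: le_trans (ler_norm_sum _ _ _) _.
apply: le_trans (_ : \sum_(m < M) B <= _); first by apply: ler_sum => m _.
by rewrite sumr_const card_ord mulr_natl.
Qed.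

Lemma normr_vstar_le x : `|vs x| <= H.
Proof.
set B := \big[Num.max/0]_y `|vs y|.
have le_B y : `|vs y| <= B by rewrite /B (bigD1 y) //= le_max lexx.
have B_ge0 : 0 <= B := le_trans (normr_ge0 _) (le_B x).
have B_fix : B <= 1 + gamma * B.
  rewrite {1}/B; apply: (big_ind (fun z => z <= 1 + gamma * B)) => [||y _].
  - by rewrite addr_ge0 ?mulr_ge0.
  - by move=> p q p_le q_le; rewrite ge_max p_le.
  rewrite (vs_opt y); apply: normr_maxA_le => a; apply: le_trans (ler_normD _ _) _.
  by rewrite lerD // normrM ger0_norm // ler_wpM2l // normr_Pop_le.
have := mulr_Hor gamma_lt1; have := le_B x; move: gamma_ge0 gamma_lt1; nra.
Qed.

Lemma mdvi_v0 x : v 0 x = 0.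
Proof. by rewrite /mdvi_v /= mulr0 subr0. Qed.

Lemma normr_mdvi_v_le k x : `|v k x| <= H.
Proof.
elim: k x => [|k IH] x; first by rewrite mdvi_v0 normr0 (le_trans _ (Hor_ge1 _ _)).
rewrite /mdvi_v mdvi_wprevS !mdvi_w_maxA; apply: maxA_dist => // a.
rewrite mdvi_sS addrK -(Hor_rec gamma_lt1); apply: le_trans (ler_normD _ _) _.
by rewrite lerD // normrM ger0_norm // ler_wpM2l // normr_Phat_le.
Qed.

(* By [mdvi_errS] this is the paper's [Ek]; the crude bound [Aalpha alpha k * eb] it gets
   from event E_2 suffices. *)
Definition mdvi_err k x a := s k x a - Aalpha alpha k * r x a - gamma * Pop P (wp k) x a.

Lemma mdvi_err0 x a : mdvi_err 0 x a = 0.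
Proof.
rewrite /mdvi_err /mdvi_s /Aalpha big_ord0 (Pop_eq _ (g := fun _ => 0)) // Pop_cst //=; ring.
Qed.

Lemma mdvi_errS k x a :
  mdvi_err k.+1 x a = eps samples a0 alpha gamma r P k.+1 x a + alpha * mdvi_err k x a.
Proof.
rewrite /mdvi_err /eps mdvi_sS AalphaS /= (Pop_eq _ (g := w k)) => [|y];
  last exact: mdvi_wprevS.
by rewrite (Pop_eq _ (f := v k) (g := fun y => w k y - alpha * wp k y)) // PopB //; ring.
Qed.

Lemma normr_mdvi_err_le k x a : (k <= K)%N -> `|mdvi_err k x a| <= Aalpha alpha k * eb.
Proof.
elim: k => [|k IH] kK; first by rewrite mdvi_err0 normr0 /Aalpha big_ord0 mul0r.
rewrite mdvi_errS AalphaS mulrDl mul1r -mulrA; apply: le_trans (ler_normD _ _) _.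
rewrite lerD ?eps_bound // normrM ger0_norm // ler_wpM2l // IH //.
exact: ltnW.
Qed.

Lemma w_sub_vstar_step k c : (k < K)%N ->
  (forall y, `|w k y - Aalpha alpha k * vs y| <= c) ->
  forall x, `|w k.+1 x - Aalpha alpha k.+1 * vs x|
    <= Aalpha alpha k.+1 * eb + gamma * (c + alpha ^+ k * H).
Proof.
move=> kK wc x; rewrite mdvi_w_maxA (vs_opt x).
apply: maxA_dist => [|a]; first exact: Aalpha_ge0.
have -> : s k.+1 x a - Aalpha alpha k.+1 * (r x a + gamma * Pop P vs x a)
    = mdvi_err k.+1 x a
      + gamma * Pop P (fun y => w k y - Aalpha alpha k * vs y - alpha ^+ k * vs y) x a.
  rewrite /mdvi_err !PopB // (Pop_eq _ (f := wp k.+1) (g := w k)) => [|y];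
    last exact: mdvi_wprevS.
  by rewrite AalphaSr; ring.
apply: le_trans (ler_normD _ _) _; rewrite lerD ?normr_mdvi_err_le //.
rewrite normrM ger0_norm // ler_wpM2l //; apply: normr_Pop_le => // y.
apply: le_trans (ler_normB _ _) _.
by rewrite lerD // normrM ger0_norm ?exprn_ge0 // ler_wpM2l ?exprn_ge0 ?normr_vstar_le.
Qed.

Lemma normr_w_sub_vstar_le k x : (k <= K)%N ->
  `|w k x - Aalpha alpha k * vs x| <= H * Agamma alpha gamma k + Ainf alpha * H * eb.
Proof.
have H_ge0 : 0 <= H := le_trans ler01 (Hor_ge1 gamma_ge0 gamma_lt1).
have Ainf_ge0 : 0 <= Ainf alpha by rewrite invr_ge0 subr_ge0 ltW.
elim: k x => [|k IH] x kK.
  rewrite /mdvi_w /Aalpha /Agamma big_ord0 big_nil /= mul0r subr0 normr0 mulr0 add0r.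
  by rewrite !mulr_ge0.
apply: le_trans (w_sub_vstar_step kK (IH^~ (ltnW kK)) x) _.
have A_le : Aalpha alpha k.+1 * eb <= Ainf alpha * eb.
  by rewrite ler_wpM2r // Aalpha_le_Ainf.
have Ainf_rec : Ainf alpha * H * eb = Ainf alpha * eb + gamma * (Ainf alpha * H * eb).
  by rewrite -{1}(Hor_rec gamma_lt1); ring.
rewrite AgammaS; lra.
Qed.

Lemma w_sub_wprev_step k c : (k < K)%N ->
  (forall y, `|w k y - wp k y| <= c) ->
  forall x, `|w k.+1 x - wp k.+1 x| <= 2 * eb + alpha ^+ k + gamma * c.
Proof.
move=> kK wc x; rewrite mdvi_wprevS !mdvi_w_maxA -[X in _ - X]mul1r.
apply: maxA_dist => // a.
have -> : s k.+1 x a - 1 * s k x a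
    = eps samples a0 alpha gamma r P k.+1 x a - (1 - alpha) * mdvi_err k x a
      + alpha ^+ k * r x a + gamma * Pop P (fun y => w k y - 1 * wp k y) x a.
  have := mdvi_errS k x a; rewrite /mdvi_err PopB // AalphaSr.
  rewrite (Pop_eq _ (f := wp k.+1) (g := w k)) => [|y]; last exact: mdvi_wprevS.
  by move=> e; lra.
have err_le : `|(1 - alpha) * mdvi_err k x a| <= eb.
  rewrite normrM ger0_norm; last by rewrite subr_ge0 ltW.
  apply: le_trans (_ : (1 - alpha) * (Aalpha alpha k * eb) <= _).
    by rewrite ler_wpM2l ?subr_ge0 ?(ltW alpha_lt1) // normr_mdvi_err_le // ltnW.
  by rewrite mulrA ler_piMl // Aalpha_mul_le1.
have eps_le := eps_bound (k := k.+1) kK x a.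
have r_le : `|alpha ^+ k * r x a| <= alpha ^+ k.
  by rewrite normrM ger0_norm ?exprn_ge0 // ler_piMr ?exprn_ge0.
have P_le : `|gamma * Pop P (fun y => w k y - 1 * wp k y) x a| <= gamma * c.
  by rewrite normrM ger0_norm // ler_wpM2l // normr_Pop_le // => y; rewrite mul1r.
apply: le_trans (ler_normD _ _) _; apply: le_trans (lerD (ler_normD _ _) (lexx _)) _.
apply: le_trans (lerD (lerD (ler_normB _ _) (lexx _)) (lexx _)) _.
lra.
Qed.

Lemma normr_w_sub_wprev_le k x : (k < K)%N ->
  `|w k.+1 x - wp k.+1 x| <= Agamma alpha gamma k + alpha ^+ k + 2 * H * eb.
Proof.
have H_ge1 := Hor_ge1 gamma_ge0 gamma_lt1.
have H_rec : 2 * H * eb = 2 * eb + gamma * (2 * H * eb).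
  by rewrite -{1}(Hor_rec gamma_lt1); ring.
elim: k x => [|k IH] x kK.
  have w0 y : `|w 0 y - wp 0 y| <= 0 by rewrite /mdvi_w /mdvi_wprev /= subr0 normr0.
  apply: le_trans (w_sub_wprev_step kK w0 x) _.
  rewrite /Agamma big_nil expr0 mulr0; have := eb_ge0; nra.
apply: le_trans (w_sub_wprev_step kK (IH^~ (ltnW kK)) x) _.
rewrite AgammaS exprS; lra.
Qed.

Lemma mdvi_v_sub_vstar k y : v k y - vs y
  = (1 - alpha) * (w k y - Aalpha alpha k * vs y) - alpha ^+ k * vs y
    + alpha * (w k y - wp k y).
Proof.
have geom := Aalpha_geom alpha k.
rewrite /mdvi_v -[vs y in LHS]mul1r -[in LHS]geom; ring.
Qed.

Lemma normr_mdvi_v_sub_vstar_le n y : (n < K)%N ->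
  `|v n.+1 y - vs y|
    <= 2 * H * (2 * Num.max alpha gamma ^+ n + Agamma alpha gamma n / Ainf alpha + 2 * eb).
Proof.
move=> nK; apply: le_trans (contraction_rate_le _ _ _ _ _ n) => //.
rewrite mdvi_v_sub_vstar; apply: le_trans (ler_normD _ _) _.
apply: lerD; last first.
  by rewrite normrM ger0_norm // ler_wpM2l // normr_w_sub_wprev_le.
apply: le_trans (ler_normB _ _) _; apply: lerD.
  rewrite normrM ger0_norm ?subr_ge0 ?(ltW alpha_lt1) //.
  by rewrite ler_wpM2l ?subr_ge0 ?(ltW alpha_lt1) // normr_w_sub_vstar_le.
by rewrite normrM ger0_norm ?exprn_ge0 // ler_wpM2l ?exprn_ge0 // normr_vstar_le.
Qed.

End Bounds.

Theorem lemma6 (R : realType) (X A : finType) (a0 : A)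
  (gamma alpha delta : R) (r : X -> A -> R) (P : X -> A -> X -> R)
  (vstar : X -> R) (K M : nat) (samples : nat -> 'I_M -> X -> A -> X) :
  0 <= gamma < 1 ->
  (forall x a, -1 <= r x a <= 1) ->
  is_kernel P ->
  bellman_opt a0 gamma r P vstar ->
  0 <= alpha < 1 ->
  (0 < K)%N -> (0 < M)%N ->
  0 < delta < 1 ->
  (* event E_1 *)
  (forall k, (1 <= k <= K)%N -> forall x a,
     `| Ek samples a0 alpha gamma r P k x a |
       < 3 * Hor gamma * Num.sqrt (Ainf alpha * iota1 X A K delta / M%:R)) ->
  (* event E_2 *)
  (forall k, (1 <= k <= K)%N -> forall x a,
     `| eps samples a0 alpha gamma r P k x a |
       < 3 * Hor gamma * Num.sqrt (iota1 X A K delta / M%:R)) ->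
  (forall k, (1 <= k <= K - 1)%N -> forall x a,
     sigmaP P (mdvi_v samples a0 alpha gamma r k) x a
       <= 2 * Hor gamma *
          Num.min 1 (2 * Num.max alpha gamma ^+ (k - 1)
                     + Agamma alpha gamma (k - 1) / Ainf alpha
                     + 6 * Hor gamma * Num.sqrt (iota1 X A K delta / M%:R))
          + sigmaP P vstar x a)
  /\ (forall x a, sigmaP P (mdvi_v samples a0 alpha gamma r 0) x a = 0).
Proof.
move=> gamma01 r_bound kP vs_opt alpha01 _ M_gt0 _ _ eps_E2.
case/andP: gamma01 => gamma_ge0 gamma_lt1; case/andP: alpha01 => alpha_ge0 alpha_lt1.
have r_le1 x a : `|r x a| <= 1 by rewrite ler_norml r_bound.
have H_ge0 : 0 <= Hor gamma := le_trans ler01 (Hor_ge1 gamma_ge0 gamma_lt1).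
set eb := 3 * Hor gamma * Num.sqrt (iota1 X A K delta / M%:R).
have eb_ge0 : 0 <= eb by rewrite !mulr_ge0 ?sqrtr_ge0.
have eps_le k : (1 <= k <= K)%N -> forall x a, `|eps samples a0 alpha gamma r P k x a| <= eb.
  by move=> kK x a; apply/ltW/eps_E2.
split=> [[//|n] /andP[_ nK] x a|x a]; last exact: sigmaP_cst (mdvi_v0 _ _ _ _ _).
have {nK} nK : (n < K)%N by rewrite (leq_trans nK) // leq_subr.
rewrite subn1 /= (_ : 6 * _ * _ = 2 * eb); last by rewrite /eb; ring.
apply: sigmaP_le_dist => // y.
rewrite minr_pMr ?mulr_ge0 // mulr1 le_min; apply/andP; split.
- apply: le_trans (ler_normB _ _) _.
  have := normr_mdvi_v_le samples a0 gamma_ge0 gamma_lt1 alpha_ge0 r_le1 M_gt0 n.+1 y.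
  have := normr_vstar_le gamma_ge0 gamma_lt1 r_le1 kP vs_opt y.
  lra.
- exact: (normr_mdvi_v_sub_vstar_le gamma_ge0 gamma_lt1 alpha_ge0 alpha_lt1 r_le1 kP vs_opt
            eb_ge0 eps_le y nK).
Qed.
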